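(* Let $N$ be even, $J_1,J_2>0$, and let $\mathcal H_N$ be the plaquette orbital Hamiltonian on the torus $\mathbb T_N$ (see context). (i) If $J_1=J_2>0$, then every ground state of $\mathcal H_N$ can be obtained from a constant configuration $\mathbf S_{\boldsymbol r}\equiv \boldsymbol e$, for some unit vector $\boldsymbol e\in\mathbb R^2$, by successive applications of a subset of the maps $(\boldsymbol\varphi_{\boldsymbol r})$. (ii) If $J_1>J_2>0$, then every ground state arises from the constant configuration $\mathbf S_{\boldsymbol r}\equiv\boldsymbol e_1$ by successive applications of a subset of the maps $(\boldsymbol\varphi_{\boldsymbol r})$; if $J_2>J_1>0$, every ground state arises in this way from $\mathbf S_{\boldsymbol r}\equiv \boldsymbol e_2$.
   Context: Let $N$ be an even positive integer and $\mathbb T_N=(\mathbb Z/N\mathbb Z)^2$ the $N\times N$ torus, with unit vectors $\boldsymbol e_1=(1,0)$, $\boldsymbol e_2=(0,1)$. Nearest-neighbour edges are of two types: the horizontal edge $\langle \boldsymbol r,\boldsymbol r+\boldsymbol e_1\rangle$ is an $x$-edge if $r_1$ is even and a $z$-edge if $r_1$ is odd; the vertical edge $\langle\boldsymbol r,\boldsymbol r+\boldsymbol e_2\rangle$ is an $x$-edge if $r_2$ is even and a $z$-edge if $r_2$ is odd. (So each plaquette whose lower-left corner has both coordinates even consists of four $x$-edges, and each plaquette whose lower-left corner has both coordinates odd consists of four $z$-edges.) A configuration is $\mathbf S=(\mathbf S_{\boldsymbol r})_{\boldsymbol r\in\mathbb T_N}$ with each $\mathbf S_{\boldsymbol r}=(S^x_{\boldsymbol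 r},S^z_{\boldsymbol r})$ a unit vector in $\mathbb R^2$. The Hamiltonian is $\mathcal H_N(\mathbf S)=-J_1\sum_{\langle \boldsymbol r,\boldsymbol r'\rangle\ x\text{-edge}}S^x_{\boldsymbol r}S^x_{\boldsymbol r'}-J_2\sum_{\langle \boldsymbol r,\boldsymbol r'\rangle\ z\text{-edge}}S^z_{\boldsymbol r}S^z_{\boldsymbol r'}$. A ground state is a configuration minimizing $\mathcal H_N$. For $\boldsymbol r$ with both coordinates even, $\boldsymbol\varphi_{\boldsymbol r}$ maps $\mathbf S$ to the configuration obtained by replacing $S^x_{\boldsymbol r'}$ by $-S^x_{\boldsymbol r'}$ at the four sites $\boldsymbol r'\in\{\boldsymbol r,\boldsymbol r+\boldsymbol e_1,\boldsymbol r+\boldsymbol e_2,\boldsymbol r+\boldsymbol e_1+\boldsymbol e_2\}$ (all other components unchanged); for $\boldsymbol r$ with both coordinates odd, $\boldsymbol\varphi_{\boldsymbol r}$ does the same with the $z$-components instead of the $x$-components. *)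

From mathcomp Require Import all_boot all_order all_algebra.
From mathcomp Require Import reals.
Set Implicit Arguments. Unset Strict Implicit. Unset Printing Implicit Defensive.
Import Order.TTheory GRing.Theory Num.Theory.
Local Open Scope ring_scope.

(* Sites of the torus T_N = (Z/NZ)^2, coordinates represented in 0..N-1. *)
Definition site (N : nat) := ('I_N * 'I_N)%type.

(* A configuration assigns to each site a pair (S^x, S^z). *)
Definition config (R : realType) (N : nat) := site N -> (R * R)%type.

Definition shift1 N (r : site N) : site N := (ordS r.1, r.2).
Definition shift2 N (r : site N) : site N := (r.1, ordS r.2).

Definition unit_vec (R : realType) (v : R * R) : Prop := v.1 ^+ 2 + v.2 ^+ 2 = 1.
Definition unit_config (R : realType) N (S : config R N) : Prop :=
  forall r, unit_vec (S r).

Definition edge_energy (R : realType) (J1 J2 : R) (xedge : bool) (a c : R * R) : R :=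
  if xedge then - J1 * (a.1 * c.1) else - J2 * (a.2 * c.2).

(* Every nearest-neighbour edge is <r, r+e1> or <r, r+e2>; horizontal edge
   <r,r+e1> is an x-edge iff r_1 even, vertical <r,r+e2> iff r_2 even. *)
Definition hamiltonian (R : realType) N (J1 J2 : R) (S : config R N) : R :=
  \sum_(r : site N)
     (edge_energy J1 J2 (~~ odd r.1) (S r) (S (shift1 r))
    + edge_energy J1 J2 (~~ odd r.2) (S r) (S (shift2 r))).

Definition ground_state (R : realType) N (J1 J2 : R) (S : config R N) : Prop :=
  unit_config S /\
  forall T : config R N, unit_config T -> hamiltonian J1 J2 S <= hamiltonian J1 J2 T.

Definition plaq_pos N (r : site N) : bool :=
  (~~ odd r.1 && ~~ odd r.2) || (odd r.1 && odd r.2).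

Definition plaquette N (r : site N) : seq (site N) :=
  [:: r; shift1 r; shift2 r; shift1 (shift2 r)].

Definition phi (R : realType) N (r : site N) (S : config R N) : config R N :=
  fun r' => if r' \in plaquette r then
              (if ~~ odd r.1 then (- (S r').1, (S r').2) else ((S r').1, - (S r').2))
            else S r'.

Definition const_config (R : realType) N (e : R * R) : config R N := fun _ => e.

(* S is obtained from the constant configuration e by successive applications
   of a subset (a duplicate-free list) of the maps phi_r. *)
Definition generated_from (R : realType) N (e : R * R) (S : config R N) : Prop :=
  exists s : seq (site N), [/\ uniq s, all (@plaq_pos N) s &
    forall r, S r = foldr (@phi R N) (@const_config R N e) s r].

From mathcomp Require Import all_boot all_order all_algebra.
From mathcomp Require Import reals ring lra.
Import Order.TTheory GRing.Theory Num.Theory.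
Local Open Scope ring_scope.
Set Implicit Arguments. Unset Strict Implicit.

(* Completing the square on every bond, and using that for N even each site
   has exactly one x-bond and one z-bond in each lattice direction,
     H(S) = sum over bonds of (J/2) (difference of the coupled components)^2
            - sum over sites of (J1 (S^x)^2 + J2 (S^z)^2).
   A constant configuration along the stronger coupling makes the first sum
   vanish and every site weight equal to max(J1, J2), so a ground state does
   the same.  Hence coupled components agree across each bond: S^x is
   constant on x-plaquettes, S^z on z-plaquettes, and by connectivity of the
   torus |S^x| and |S^z| are constant; when J1 <> J2 the maximal weight also
   forces the weaker component to vanish.  Since each site lies in exactly one
   x-plaquette and one z-plaquette, flipping the plaquettes whose lower-left
   corner has a negative component rebuilds S from the constant configuration
   (|S^x|, |S^z|). *)

Section TorusGeometry.

Variable N : nat.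
Hypothesis N_even : ~~ odd N.

Lemma odd_ordS (i : 'I_N) : odd (ordS i) = ~~ odd i.
Proof.
rewrite /ordS /=; have [lt_iN | le_Ni] := ltnP i.+1 N; first by rewrite modn_small.
have iN : i.+1 = N by apply/eqP; rewrite eqn_leq ltn_ord le_Ni.
have odd_i : odd i by move: N_even; rewrite -(congr1 odd iN) /= negbK.
by rewrite iN modnn odd_i.
Qed.

Lemma exists_unique_cell_of_parity (p : bool) (j : 'I_N) :
  exists i0 : 'I_N, forall i : 'I_N,
    (odd i == p) && ((j == i) || (j == ordS i)) = (i == i0).
Proof.
exists (if odd j == p then j else ord_pred j) => i.
apply/idP/eqP => [/andP[/eqP <- /orP[/eqP->|/eqP->]] | ->].
- by rewrite eqxx.
- by rewrite odd_ordS; case: (odd i) => /=; rewrite ordSK.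
case: ifP => [-> | /negbT odd_j]; first by rewrite eqxx.
rewrite ord_predK eqxx orbT andbT.
by move: odd_j; rewrite -[in odd j](ord_predK j) odd_ordS; case: (odd _); case: p.
Qed.

Lemma mem_plaquette (q r : site N) :
  (r \in plaquette q) =
  ((r.1 == q.1) || (r.1 == ordS q.1)) && ((r.2 == q.2) || (r.2 == ordS q.2)).
Proof.
case: r q => r1 r2 [q1 q2].
rewrite /plaquette /shift1 /shift2 !inE !xpair_eqE /=.
by case: (r1 == q1); case: (r1 == ordS q1); case: (r2 == q2); case: (r2 == ordS q2).
Qed.

Lemma exists_unique_plaquette_of_parity (p : bool) (r : site N) :
  exists q0 : site N, forall q : site N,
    [&& odd q.1 == p, odd q.2 == p & r \in plaquette q] = (q == q0).
Proof.
have [i0 Hi] := exists_unique_cell_of_parity p r.1.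
have [j0 Hj] := exists_unique_cell_of_parity p r.2.
exists (i0, j0) => -[q1 q2].
rewrite mem_plaquette xpair_eqE /= -Hi -Hj.
by case: (odd q1 == p); case: (odd q2 == p); case: (_ || _); case: (_ || _).
Qed.

End TorusGeometry.

Lemma count_enum_pred1_and (T : finType) (P : pred T) (q0 : T) (b : bool) :
  (forall q, P q = (q == q0) && b) -> count P (enum T) = b.
Proof.
move=> PE; case: b in PE *.
  rewrite (eq_count (a2 := pred1 q0)) => [|q]; last by rewrite PE andbT.
  by rewrite count_uniq_mem ?enum_uniq // mem_enum.
by rewrite (eq_count (a2 := pred0)) ?count_pred0 // => q; rewrite PE andbF.
Qed.

Definition plaquette_aligned (R : realType) N (S : config R N) : Prop :=
  (forall q r : site N, ~~ odd q.1 -> ~~ odd q.2 -> r \in plaquette q ->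
     (S r).1 = (S q).1) /\
  (forall q r : site N, odd q.1 -> odd q.2 -> r \in plaquette q ->
     (S r).2 = (S q).2).

Section Generation.

Variables (R : realType) (N : nat).
Hypothesis N_even : ~~ odd N.

Lemma foldr_phiE (S0 : config R N) (s : seq (site N)) (r : site N) :
  foldr (@phi R N) S0 s r =
  ((-1) ^+ count (fun q : site N => ~~ odd q.1 && (r \in plaquette q)) s * (S0 r).1,
   (-1) ^+ count (fun q : site N => odd q.1 && (r \in plaquette q)) s * (S0 r).2).
Proof.
elim: s => [|q s IH] /=; first by rewrite !expr0 !mul1r; case: (S0 r).
rewrite {1}/phi IH.
by case: (r \in plaquette q); case: (odd q.1) => /=;
  rewrite ?addn0 ?add0n ?exprS ?mulN1r ?mulNr.
Qed.

(* The flipped plaquettes are those whose lower-left corner carries a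
   negative component. *)
Lemma generated_from_plaquette_aligned (S : config R N) (a b : R) :
  (forall r, `|(S r).1| = a) -> (forall r, `|(S r).2| = b) ->
  plaquette_aligned S -> generated_from (a, b) S.
Proof.
move=> Sa Sb [Cx Cz].
pose P q := plaq_pos q && (if ~~ odd q.1 then (S q).1 < 0 else (S q).2 < 0).
exists [seq q <- enum {: site N} | P q]; split.
- by rewrite filter_uniq // enum_uniq.
- by apply/allP => q; rewrite mem_filter => /andP[/andP[]].
move=> r; rewrite foldr_phiE /const_config !count_filter -enumT -(Sa r) -(Sb r).
have [q0 E0] := exists_unique_plaquette_of_parity N_even false r.
have [q1 E1] := exists_unique_plaquette_of_parity N_even true r.
have /and3P[/eqP q01 /eqP q02 r_q0] := etrans (E0 q0) (eqxx q0).
have /and3P[/eqP q11 /eqP q12 r_q1] := etrans (E1 q1) (eqxx q1).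
rewrite (@count_enum_pred1_and _ _ q0 ((S r).1 < 0)); last first.
  move=> q; rewrite /predI /= [q \in _]inE andbT /P /plaq_pos; have := E0 q.
  case: (eqVneq q q0) => [->|_]; first by rewrite q01 q02 r_q0 (Cx q0 r) ?q01 ?q02.
  by case: (odd q.1); case: (odd q.2); case: (r \in plaquette q).
rewrite (@count_enum_pred1_and _ _ q1 ((S r).2 < 0)); last first.
  move=> q; rewrite /predI /= [q \in _]inE andbT /P /plaq_pos; have := E1 q.
  case: (eqVneq q q1) => [->|_]; first by rewrite q11 q12 r_q1 (Cz q1 r) ?q11 ?q12.
  by case: (odd q.1); case: (odd q.2); case: (r \in plaquette q).
by rewrite -!numEsign; case: (S r).
Qed.

End Generation.

Definition bond_penalty (R : realFieldType) (J1 J2 : R) (xbond : bool) (a c : R * R) : R :=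
  if xbond then J1 / 2 * (a.1 - c.1) ^+ 2 else J2 / 2 * (a.2 - c.2) ^+ 2.

Definition site_weight (R : realFieldType) (J1 J2 : R) (a : R * R) : R :=
  J1 * a.1 ^+ 2 + J2 * a.2 ^+ 2.

Definition bond_aligned (R : realFieldType) (xbond : bool) (a c : R * R) : Prop :=
  if xbond then a.1 = c.1 else a.2 = c.2.

Lemma plaquette_aligned_of_bonds (R : realType) N (S : config R N) :
  (forall r : site N, bond_aligned (~~ odd r.1) (S r) (S (shift1 r))) ->
  (forall r : site N, bond_aligned (~~ odd r.2) (S r) (S (shift2 r))) ->
  plaquette_aligned S.
Proof.
rewrite /bond_aligned => bond1 bond2.
split=> q r q1 q2; rewrite /plaquette !inE => /or4P[] /eqP-> //.
- by have := bond1 q; rewrite q1.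
- by have := bond2 q; rewrite q2.
- by have := bond1 (shift2 q); have := bond2 q; rewrite /= q1 q2 => -> ->.
- by have := bond1 q; rewrite q1.
- by have := bond2 q; rewrite q2.
- by have := bond1 (shift2 q); have := bond2 q; rewrite /= q1 q2 => -> ->.
Qed.

Section BondPenalty.

Variables (R : realFieldType) (J1 J2 : R).
Hypotheses (J1_gt0 : 0 < J1) (J2_gt0 : 0 < J2).

Lemma bond_penalty_ge0 b (a c : R * R) : 0 <= bond_penalty J1 J2 b a c.
Proof. by rewrite /bond_penalty; case: b; rewrite mulr_ge0 ?sqr_ge0 ?divr_ge0 ?ltW. Qed.

Lemma bond_penalty_id b (a : R * R) : bond_penalty J1 J2 b a a = 0.
Proof. by rewrite /bond_penalty; case: b; rewrite subrr expr0n mulr0. Qed.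

Lemma bond_penalty_eq0 b (a c : R * R) :
  bond_penalty J1 J2 b a c = 0 -> bond_aligned b a c.
Proof.
have half_neq0 (J : R) : 0 < J -> J / 2 != 0.
  by move=> J_gt0; rewrite mulf_neq0 ?invr_eq0 ?pnatr_eq0 ?gt_eqF.
rewrite /bond_penalty /bond_aligned.
by case: b => /eqP; rewrite mulf_eq0 expf_eq0 subr_eq0 /= (negbTE (half_neq0 _ _)) // => /eqP.
Qed.

End BondPenalty.

Section Energy.

Variables (R : realType) (J1 J2 : R).

(* A bond (r, sg r) of type b charges half the type-b weight to each end; as
   the type alternates along sg, every site is charged once for each type. *)
Lemma sum_edge_energy_complete_squares (T : finType) (S : T -> R * R)
    (sg : T -> T) (c : T -> bool) :
  injective sg -> (forall r, c (sg r) = ~~ c r) ->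
  \sum_r edge_energy J1 J2 (~~ c r) (S r) (S (sg r)) =
  \sum_r bond_penalty J1 J2 (~~ c r) (S r) (S (sg r))
  - \sum_r site_weight J1 J2 (S r) / 2.
Proof.
move=> sg_inj c_sg.
pose w b r := if b then J1 / 2 * (S r).1 ^+ 2 else J2 / 2 * (S r).2 ^+ 2.
have edgeE r : edge_energy J1 J2 (~~ c r) (S r) (S (sg r)) =
    bond_penalty J1 J2 (~~ c r) (S r) (S (sg r)) - (w (~~ c r) r + w (c (sg r)) (sg r)).
  by rewrite /edge_energy /bond_penalty /w c_sg; case: (c r) => /=; field.
rewrite (eq_bigr _ (fun r _ => edgeE r)) sumrB big_split /=.
have -> : \sum_r w (c (sg r)) (sg r) = \sum_r w (c r) r.
  by rewrite [RHS](reindex_inj sg_inj).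
rewrite -big_split.
congr (_ - _); apply: eq_bigr => r _.
by rewrite /w /site_weight; case: (c r) => /=; field.
Qed.

Lemma hamiltonian_complete_squares N (S : config R N) : ~~ odd N ->
  hamiltonian J1 J2 S =
  \sum_(r : site N) (bond_penalty J1 J2 (~~ odd r.1) (S r) (S (shift1 r))
        + bond_penalty J1 J2 (~~ odd r.2) (S r) (S (shift2 r)))
  - \sum_(r : site N) site_weight J1 J2 (S r).
Proof.
move=> N_even.
have shift1_inj : injective (@shift1 N).
  by apply: (can_inj (g := fun r : site N => (ord_pred r.1, r.2))) => -[a b];
     rewrite /shift1 /= ordSK.
have shift2_inj : injective (@shift2 N).
  by apply: (can_inj (g := fun r : site N => (r.1, ord_pred r.2))) => -[a b];
     rewrite /shift2 /= ordSK.
rewrite /hamiltonian big_split /= big_split /=.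
rewrite (sum_edge_energy_complete_squares S shift1_inj (c := fun r => odd r.1));
  last by move=> r; rewrite /shift1 /= odd_ordS.
rewrite (sum_edge_energy_complete_squares S shift2_inj (c := fun r => odd r.2));
  last by move=> r; rewrite /shift2 /= odd_ordS.
by rewrite -mulr_suml; field.
Qed.

End Energy.

Section GroundState.

Variables (R : realType) (J1 J2 : R).
Hypotheses (J1_gt0 : 0 < J1) (J2_gt0 : 0 < J2).

Lemma site_weight_le_max (a : R * R) :
  unit_vec a -> site_weight J1 J2 a <= Num.max J1 J2.
Proof.
rewrite /unit_vec /site_weight => a_unit.
have J1_le : J1 <= Num.max J1 J2 by rewrite le_max lexx.
have J2_le : J2 <= Num.max J1 J2 by rewrite le_max lexx orbT.
rewrite -[Num.max _ _]mulr1 -a_unit; have := sqr_ge0 a.1; have := sqr_ge0 a.2; nra.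
Qed.

Lemma exists_unit_site_weight_max :
  exists2 e : R * R, unit_vec e & site_weight J1 J2 e = Num.max J1 J2.
Proof.
rewrite /unit_vec /site_weight; case: (leP J1 J2) => _.
- by exists (0, 1); rewrite /= expr0n expr1n ?add0r ?mulr0 ?mulr1 ?add0r.
- by exists (1, 0); rewrite /= expr0n expr1n ?addr0 ?mulr0 ?mulr1 ?addr0.
Qed.

Lemma ground_state_saturates N (S : config R N) : ~~ odd N ->
  ground_state J1 J2 S ->
  [/\ forall r : site N, bond_penalty J1 J2 (~~ odd r.1) (S r) (S (shift1 r)) = 0,
      forall r : site N, bond_penalty J1 J2 (~~ odd r.2) (S r) (S (shift2 r)) = 0 &
      forall r : site N, site_weight J1 J2 (S r) = Num.max J1 J2].
Proof.
move=> N_even [S_unit S_min].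
have [e e_unit e_max] := exists_unit_site_weight_max.
have := S_min (@const_config R N e) (fun=> e_unit).
rewrite !hamiltonian_complete_squares // /const_config.
under [X in _ <= X - _]eq_bigr do rewrite !bond_penalty_id addr0.
under [X in _ <= _ - X]eq_bigr do rewrite e_max.
rewrite big1_eq sub0r.
set D := \sum_r _; set W := \sum_r _; move=> H_le.
have D_ge0 : 0 <= D by apply: sumr_ge0 => r _; rewrite addr_ge0 ?bond_penalty_ge0.
have W_le : W <= \sum_(r : site N) Num.max J1 J2.
  by apply: ler_sum => r _; apply: site_weight_le_max.
have D0 : D = 0 by lra.
have W_eq : \sum_(r : site N) (Num.max J1 J2 - site_weight J1 J2 (S r)) = 0.
  by rewrite sumrB -/W; lra.
have pen_ge0 := bond_penalty_ge0 J1_gt0 J2_gt0.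
have D0r := psumr_eq0P (fun r _ => addr_ge0 (pen_ge0 _ _ _) (pen_ge0 _ _ _)) D0.
have weight_gap_ge0 r : 0 <= Num.max J1 J2 - site_weight J1 J2 (S r).
  by rewrite subr_ge0 site_weight_le_max.
have W0r := psumr_eq0P (fun r _ => weight_gap_ge0 r) W_eq.
split=> r; have := D0r r isT; have := W0r r isT.
- by have := pen_ge0 (~~ odd r.1) (S r) (S (shift1 r));
     have := pen_ge0 (~~ odd r.2) (S r) (S (shift2 r)); lra.
- by have := pen_ge0 (~~ odd r.1) (S r) (S (shift1 r));
     have := pen_ge0 (~~ odd r.2) (S r) (S (shift2 r)); lra.
- lra.
Qed.

End GroundState.

Lemma ground_state_bonds_aligned (R : realType) N (J1 J2 : R) (S : config R N) :
  ~~ odd N -> 0 < J1 -> 0 < J2 -> ground_state J1 J2 S ->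
  (forall r : site N, bond_aligned (~~ odd r.1) (S r) (S (shift1 r))) /\
  (forall r : site N, bond_aligned (~~ odd r.2) (S r) (S (shift2 r))).
Proof.
move=> N_even J1_gt0 J2_gt0 /(ground_state_saturates J1_gt0 J2_gt0 N_even)[pen1 pen2 _].
by split=> r; [move: (pen1 r) | move: (pen2 r)]; apply: bond_penalty_eq0.
Qed.

Lemma ordS_invariant_const (T : Type) N (g : 'I_N -> T) :
  (forall i, g (ordS i) = g i) -> forall i j, g i = g j.
Proof.
move=> gS.
have to_zero (k i : 'I_N) : val k = 0%N -> g i = g k.
  move=> k0; case: i => n; elim: n => [|n IH] lt_nN.
    by congr g; apply: val_inj.
  rewrite -(IH (ltnW lt_nN)) -[RHS]gS; congr g; apply: val_inj.
  by rewrite /= modn_small.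
move=> i j; pose k := Ordinal (leq_ltn_trans (leq0n i) (ltn_ord i)).
by rewrite (to_zero k i) // (to_zero k j).
Qed.

Lemma shift_invariant_const (T : Type) N (f : site N -> T) :
  (forall r, f (shift1 r) = f r) -> (forall r, f (shift2 r) = f r) ->
  forall r r', f r = f r'.
Proof.
move=> f1 f2 [a b] [a' b'].
rewrite (ordS_invariant_const (g := fun a => f (a, b)) (fun i => f1 (i, b)) a a').
exact: (ordS_invariant_const (g := fun b => f (a', b)) (fun i => f2 (a', i))).
Qed.

Lemma bond_aligned_unit_norm (R : realType) b (a c : R * R) :
  unit_vec a -> unit_vec c -> bond_aligned b a c ->
  (`|a.1|, `|a.2|) = (`|c.1|, `|c.2|).
Proof.
have norm_eq (x y : R) : x ^+ 2 = y ^+ 2 -> `|x| = `|y|.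
  by move/eqP; rewrite eqf_sqr -eqr_norm2 => /eqP.
rewrite /unit_vec /bond_aligned; case: b => a_unit c_unit a_c.
- by rewrite a_c (norm_eq a.2 c.2) //; rewrite a_c in a_unit; lra.
- by rewrite a_c (norm_eq a.1 c.1) //; rewrite a_c in a_unit; lra.
Qed.

Lemma ground_state_generated_from_norms (R : realType) N (J1 J2 : R)
    (S : config R N) (r0 : site N) :
  ~~ odd N -> 0 < J1 -> 0 < J2 -> ground_state J1 J2 S ->
  generated_from (`|(S r0).1|, `|(S r0).2|) S.
Proof.
move=> N_even J1_gt0 J2_gt0 S_gs; have [S_unit _] := S_gs.
have [bond1 bond2] := ground_state_bonds_aligned N_even J1_gt0 J2_gt0 S_gs.
pose norms r := (`|(S r).1|, `|(S r).2|).
have norms_const r : norms r = norms r0.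
  apply: shift_invariant_const => {}r; symmetry;
    apply: bond_aligned_unit_norm (S_unit _) (S_unit _) _; [exact: bond1 | exact: bond2].
apply: (@generated_from_plaquette_aligned R N N_even S)...
- by move=> r; rewrite [LHS](congr1 fst (norms_const r)).
- by move=> r; rewrite [LHS](congr1 snd (norms_const r)).
- exact: plaquette_aligned_of_bonds.
Qed.

Lemma unit_weight_max_norm (R : realFieldType) (J J' x z : R) :
  J' < J -> x ^+ 2 + z ^+ 2 = 1 -> J * x ^+ 2 + J' * z ^+ 2 = J ->
  `|x| = 1 /\ `|z| = 0.
Proof.
move=> J'_lt_J unit weight.
have : (J - J') * z ^+ 2 = 0.
  by rewrite -[J in RHS]mulr1 -unit in weight; rewrite mulrBl; lra.
move/eqP; rewrite mulf_eq0 subr_eq0 gt_eqF //= sqrf_eq0 => /eqP z0.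
rewrite z0 normr0; split=> //; apply/eqP; rewrite -sqr_norm_eq1.
by rewrite z0 expr0n addr0 in unit; rewrite unit.
Qed.

Theorem theorem2p1 (R : realType) (N : nat) (J1 J2 : R) :
  (0 < N)%N -> ~~ odd N -> 0 < J1 -> 0 < J2 ->
  forall S : config R N, ground_state J1 J2 S ->
    [/\ (J1 = J2 -> exists e : R * R, unit_vec e /\ generated_from e S),
        (J2 < J1 -> generated_from (1, 0) S) &
        (J1 < J2 -> generated_from (0, 1) S)].
Proof.
move=> N_gt0 N_even J1_gt0 J2_gt0 S S_gs.
pose r0 : site N := (Ordinal N_gt0, Ordinal N_gt0).
have S_gen := ground_state_generated_from_norms r0 N_even J1_gt0 J2_gt0 S_gs.
have S0_unit : unit_vec (S r0) := S_gs.1 r0.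
have [_ _ S_weight] := ground_state_saturates J1_gt0 J2_gt0 N_even S_gs.
move: (S_weight r0); rewrite /site_weight => S0_weight.
split=> [_ | J21 | J12].
- exists (`|(S r0).1|, `|(S r0).2|); split=> //.
  by rewrite /unit_vec /= !real_normK ?num_real.
- rewrite max_l ?ltW // in S0_weight.
  by have [<- <-] := unit_weight_max_norm J21 S0_unit S0_weight.
- rewrite max_r ?ltW // addrC in S0_weight; rewrite /unit_vec addrC in S0_unit.
  by have [<- <-] := unit_weight_max_norm J12 S0_unit S0_weight.
Qed.
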